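(* Let $(Y,\preceq,\prec,\to)$ be a solid vector space and let $\tau$ be its order topology. Then: (i) for a sequence $(x_n)$ in $Y$ and $x\in Y$, $x_n\to x$ in $\tau$ if and only if for every $c\succ0$ there exists $N\in\mathbb N$ such that $x-c\prec x_n\prec x+c$ for all $n>N$; (ii) $x_n\to x$ implies that $x_n\to x$ in $\tau$.
   Context: Vector space with convergence: a real vector space $Y$ with a relation $\to$ between sequences in $Y$ and points of $Y$ (uniqueness of limits not assumed) such that (C1) $x_n\to x$, $y_n\to y$ imply $x_n+y_n\to x+y$; (C2) $x_n\to x$, $\lambda\in\mathbb R$ imply $\lambda x_n\to\lambda x$; (C3) $\lambda_n\to\lambda$ in $\mathbb R$ imply $\lambda_n x\to\lambda x$. $A\subseteq Y$ is open if $x_n\to x\in A$ implies $x_n\in A$ for all but finitely many $n$; closed if $x_n\to x$, $x_n\in A$ $\forall n$ imply $x\in A$; $A^\circ$ is the union of all open subsets of $A$. A cone is a nonempty closed $K$ with $\lambda K\subseteq K$ ($\lambda\ge0$), $K+K\subseteq K$, $K\cap(-K)=\{0\}$; solid if $K\neq\{0\}$, $K^\circ\ne\emptyset$. A vector ordering is a partial order $\preceq$ with (V1) $x\preceq y\Rightarrow x+z\preceq y+z$; (V2) $\lambda\ge0$, $x\preceq y\Rightarrow\lambda x\preceq\lambda y$; (V3) $x_n\to x$, $y_n\to y$, $x_n\preceq y_n$ $\forall n\Rightarrow x\preceq y$. Solid vector space: positive cone $K=\{x:x\succeq0\}$ solid, with $x\prec y$ iff $y-x\in K^\circ$. The order topology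 $\tau$ on a solid vector space is the topology with basis the open intervals $(a,b)=\{x: a\prec x\prec b\}$, $a\prec b$. *)

From HB Require Import structures.
From mathcomp Require Import all_boot all_order all_algebra.
From mathcomp Require Import all_classical all_reals all_analysis.
Set Implicit Arguments. Unset Strict Implicit. Unset Printing Implicit Defensive.
Import Order.TTheory GRing.Theory Num.Theory.
Import numFieldNormedType.Exports.
Local Open Scope classical_set_scope.
Local Open Scope ring_scope.

Section VSC.
Variables (R : realType) (Y : lmodType R).
Variable conv : (nat -> Y) -> Y -> Prop.

Definition vector_space_with_convergence : Prop :=
  [/\ (forall (u v : nat -> Y) (x y : Y), conv u x -> conv v y ->
          conv (fun n => u n + v n) (x + y)),
      (forall (u : nat -> Y) (x : Y) (l : R), conv u x ->
          conv (fun n => l *: u n) (l *: x)) &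
      (forall (lam : nat -> R) (l : R) (x : Y), lam @ \oo --> l ->
          conv (fun n => lam n *: x) (l *: x))].

Definition conv_open (A : Y -> Prop) : Prop :=
  forall (u : nat -> Y) (x : Y), conv u x -> A x ->
    exists N : nat, forall n : nat, (N <= n)%N -> A (u n).

Definition conv_closed (A : Y -> Prop) : Prop :=
  forall (u : nat -> Y) (x : Y), conv u x -> (forall n, A (u n)) -> A x.

Definition conv_interior (A : Y -> Prop) (x : Y) : Prop :=
  exists U : Y -> Prop, [/\ conv_open U, (forall y, U y -> A y) & U x].

Definition is_cone (K : Y -> Prop) : Prop :=
  [/\ (exists x, K x), conv_closed K,
      (forall (l : R) (x : Y), 0 <= l -> K x -> K (l *: x)),
      (forall x y, K x -> K y -> K (x + y)) &
      (forall x, K x -> K (- x) -> x = 0)].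

Definition is_solid_cone (K : Y -> Prop) : Prop :=
  [/\ is_cone K, (exists x, K x /\ x <> 0) & (exists x, conv_interior K x)].

Variable le : Y -> Y -> Prop.

Definition is_vector_ordering : Prop :=
  [/\ (forall x, le x x) /\
        (forall x y, le x y -> le y x -> x = y) /\
        (forall x y z, le x y -> le y z -> le x z),
      (forall x y z, le x y -> le (x + z) (y + z)),
      (forall (l : R) x y, 0 <= l -> le x y -> le (l *: x) (l *: y)) &
      (forall (u v : nat -> Y) x y, conv u x -> conv v y ->
          (forall n, le (u n) (v n)) -> le x y)].

Definition pos_cone (x : Y) : Prop := le 0 x.

Definition slt (x y : Y) : Prop := conv_interior pos_cone (y - x).

Definition solid_vector_space : Prop :=
  [/\ vector_space_with_convergence, is_vector_ordering & is_solid_cone pos_cone].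

Definition open_interval (a b : Y) (x : Y) : Prop := slt a x /\ slt x b.

Definition order_open (U : Y -> Prop) : Prop :=
  forall x, U x -> exists a b, [/\ slt a b, open_interval a b x &
                               (forall y, open_interval a b y -> U y)].

Definition order_conv (u : nat -> Y) (x : Y) : Prop :=
  forall U, order_open U -> U x -> exists N : nat, forall n, (N <= n)%N -> U (u n).

End VSC.

From HB Require Import structures.
From mathcomp Require Import all_boot all_order all_algebra.
From mathcomp Require Import all_classical all_reals all_analysis.
Import Order.TTheory GRing.Theory Num.Theory.
Import numFieldNormedType.Exports.
Local Open Scope ring_scope.
Set Implicit Arguments. Unset Strict Implicit.

(* A strictly positive c is small enough that (x - c, x + c) sits inside any
   given interval (a, b) around x: the interior point b - x absorbs
   s (x - a) for small s > 0, because b - x - s (x - a) converges to b - x as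
   s -> 0; take c := s (x - a).  With such centred intervals as a neighbourhood
   base, (i) is immediate, and (ii) follows since u n - (x - c) and
   x + c - u n converge to the interior point c, hence eventually lie in the
   (sequentially open) interior of the positive cone. *)

Section ConvergenceInterior.
Variables (R : realType) (Y : lmodType R) (conv : (nat -> Y) -> Y -> Prop).
Hypothesis Hconv : vector_space_with_convergence conv.

Lemma conv_cst (k : Y) : conv (fun _ => k) k.
Proof.
case: Hconv => _ _ C3.
by have := C3 (fun=> 1) 1 k; rewrite scale1r; apply; apply: cvg_cst.
Qed.

Lemma conv_addr {u : nat -> Y} {x : Y} (k : Y) :
  conv u x -> conv (fun n => u n + k) (x + k).
Proof. by case: Hconv => C1 _ _ cu; apply: C1 cu (conv_cst k). Qed.

Lemma conv_opp {u : nat -> Y} {x : Y} : conv u x -> conv (fun n => - u n) (- x).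
Proof.
case: Hconv => _ C2 _ /(C2 _ _ (-1)).
by rewrite scaleN1r; under eq_fun do rewrite scaleN1r.
Qed.

Lemma conv_lower_gap {u : nat -> Y} {x : Y} (c : Y) :
  conv u x -> conv (fun n => u n - (x - c)) c.
Proof. by move=> /(conv_addr (- (x - c))); rewrite subKr. Qed.

Lemma conv_upper_gap {u : nat -> Y} {x : Y} (c : Y) :
  conv u x -> conv (fun n => x + c - u n) c.
Proof.
move=> /conv_opp/(conv_addr (x + c)); rewrite addKr.
by under eq_fun do rewrite addrC.
Qed.

Lemma conv_interior_eventually {K : Y -> Prop} {u : nat -> Y} {z : Y} :
  conv u z -> conv_interior conv K z ->
  exists N, forall n, (N <= n)%N -> conv_interior conv K (u n).
Proof.
move=> cu [U [oU sUK Uz]]; have [N HN] := oU _ _ cu Uz.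
by exists N => n /HN Un; exists U.
Qed.

Lemma conv_interior_sub (K : Y -> Prop) (z : Y) : conv_interior conv K z -> K z.
Proof. by case=> U [_ sUK Uz]; apply: sUK. Qed.

Lemma conv_interior_addr (K : Y -> Prop) (p k : Y) :
  (forall y z, K y -> K z -> K (y + z)) ->
  conv_interior conv K p -> K k -> conv_interior conv K (p + k).
Proof.
move=> Kadd [U [oU sUK Up]] Kk; exists (fun y => U (y - k)); split.
- by move=> u z cu Uz; apply: oU (conv_addr (- k) cu) Uz.
- by move=> y /sUK /(Kadd _ _)/(_ Kk); rewrite subrK.
- by rewrite addrK.
Qed.

Lemma conv_interior_scale (K : Y -> Prop) (s : R) (p : Y) :
  (forall (l : R) y, 0 <= l -> K y -> K (l *: y)) -> 0 < s ->
  conv_interior conv K p -> conv_interior conv K (s *: p).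
Proof.
move=> Kscale s_gt0 [U [oU sUK Up]]; case: Hconv => _ C2 _.
have s_neq0 : s != 0 by rewrite gt_eqF.
exists (fun y => U (s^-1 *: y)); split.
- by move=> u z /(C2 _ _ s^-1) cu Uz; apply: oU cu Uz.
- move=> y /sUK /(Kscale s _ (ltW s_gt0)).
  by rewrite scalerA mulfV // scale1r.
- by rewrite scalerA mulVf // scale1r.
Qed.

Lemma conv_interior_absorbing (K : Y -> Prop) (q p : Y) :
  conv_interior conv K q -> exists s : R, [/\ 0 < s, s <= 1 & K (q - s *: p)].
Proof.
move=> Kq; case: Hconv => _ _ C3.
have cq : conv (fun n => - (harmonic n *: p) + q) q.
  rewrite -[X in conv _ X]add0r -oppr0 -(scale0r p).
  by apply/conv_addr/conv_opp/C3/cvg_harmonic.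
have [M HM] := conv_interior_eventually cq Kq.
exists (harmonic M); split; first exact: harmonic_gt0.
- by rewrite /= invr_le1 ?ler1n ?ltr0n // unitf_gt0.
- by rewrite addrC; apply: conv_interior_sub (HM M _).
Qed.

End ConvergenceInterior.

Section SolidVectorSpace.
Variables (R : realType) (Y : lmodType R).
Variables (conv : (nat -> Y) -> Y -> Prop) (le : Y -> Y -> Prop).
Hypothesis HY : solid_vector_space conv le.

Let Hconv : vector_space_with_convergence conv. Proof. by case: HY. Qed.
Let Kadd x y : pos_cone le x -> pos_cone le y -> pos_cone le (x + y).
Proof. by case: HY => _ _ [[_ _ _ Kadd _] _ _]; apply: Kadd. Qed.
Let Kscale (l : R) x : 0 <= l -> pos_cone le x -> pos_cone le (l *: x).
Proof. by case: HY => _ _ [[_ _ Kscale _ _] _ _]; apply: Kscale. Qed.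

Lemma slt0 (c : Y) : slt conv le 0 c <-> conv_interior conv (pos_cone le) c.
Proof. by rewrite /slt subr0. Qed.

Lemma slt_le_trans (a y b : Y) :
  slt conv le a y -> pos_cone le (b - y) -> slt conv le a b.
Proof.
move=> ay /(conv_interior_addr Hconv Kadd ay).
by rewrite /slt addrC addrA subrK.
Qed.

Lemma le_slt_trans (a y b : Y) :
  pos_cone le (y - a) -> slt conv le y b -> slt conv le a b.
Proof.
move=> Kya /(conv_interior_addr Hconv Kadd)/(_ Kya).
by rewrite /slt addrA subrK.
Qed.

Lemma slt_trans (a y b : Y) :
  slt conv le a y -> slt conv le y b -> slt conv le a b.
Proof. by move=> /(conv_interior_sub (K := pos_cone le)); apply: le_slt_trans. Qed.

Lemma order_open_interval (a b : Y) : order_open conv le (open_interval conv le a b).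
Proof.
move=> x [ax xb]; exists a, b; split => //.
exact: slt_trans ax xb.
Qed.

Lemma centered_interval_mem (x c : Y) :
  slt conv le 0 c -> open_interval conv le (x - c) (x + c) x.
Proof.
rewrite slt0 => c_gt0; split; rewrite /slt.
- by rewrite subKr.
- by rewrite [x + c]addrC addrK.
Qed.

Lemma centered_subinterval (a b x : Y) : open_interval conv le a b x ->
  exists c, slt conv le 0 c /\ forall y,
    open_interval conv le (x - c) (x + c) y -> open_interval conv le a b y.
Proof.
move=> [ax xb].
have [s [s_gt0 s_le1 Kbxc]] := conv_interior_absorbing Hconv (x - a) xb.
exists (s *: (x - a)); split; first exact/slt0/conv_interior_scale.
have Kxca : pos_cone le (x - s *: (x - a) - a).
  rewrite addrAC -{1}[x - a]scale1r -scalerBl.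
  by apply: Kscale; [rewrite subr_ge0 | apply: conv_interior_sub ax].
move=> y [y_gt y_lt]; split; first exact: le_slt_trans Kxca y_gt.
by apply: slt_le_trans y_lt _; rewrite opprD addrA.
Qed.

Lemma order_conv_centered (u : nat -> Y) (x : Y) :
  order_conv conv le u x <->
  (forall c : Y, slt conv le 0 c ->
     exists N : nat, forall n : nat, (N < n)%N ->
       slt conv le (x - c) (u n) /\ slt conv le (u n) (x + c)).
Proof.
split=> [ux c c_gt0 | Hc U oU Ux].
- have [N HN] := ux _ (@order_open_interval (x - c) (x + c))
    (centered_interval_mem x c_gt0).
  by exists N => n /ltnW /HN.
- have [a [b [_ abx sabU]]] := oU x Ux.
  have [c [c_gt0 sub_ab]] := centered_subinterval abx.
  have [N HN] := Hc c c_gt0.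
  by exists N.+1 => n /HN ?; apply/sabU/sub_ab.
Qed.

Lemma conv_order_conv (u : nat -> Y) (x : Y) :
  conv u x -> order_conv conv le u x.
Proof.
move=> cu; apply/order_conv_centered => c /slt0 c_gt0.
have [N1 H1] := conv_interior_eventually (conv_lower_gap Hconv c cu) c_gt0.
have [N2 H2] := conv_interior_eventually (conv_upper_gap Hconv c cu) c_gt0.
by exists (maxn N1 N2) => n; rewrite gtn_max => /andP[/ltnW/H1 ? /ltnW/H2].
Qed.

End SolidVectorSpace.

Unset Implicit Arguments.

Theorem theorem6p5 (R : realType) (Y : lmodType R)
    (conv : (nat -> Y) -> Y -> Prop) (le : Y -> Y -> Prop)
    (HY : solid_vector_space conv le) :
  (forall (u : nat -> Y) (x : Y),
      order_conv conv le u x <->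
      (forall c : Y, slt conv le 0 c ->
         exists N : nat, forall n : nat, (N < n)%N ->
           slt conv le (x - c) (u n) /\ slt conv le (u n) (x + c))) /\
  (forall (u : nat -> Y) (x : Y), conv u x -> order_conv conv le u x).
Proof.
split=> u x; [exact: order_conv_centered | exact: conv_order_conv].
Qed.
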